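(* Let $A$ be an observable on $\mathbb C^d$ with orthonormal eigenbasis $\{\varphi_k\}_{k=0}^{d-1}$. For all unit vectors $\Phi,\Psi\in\mathbb C^d$, $$d(T_{A\Phi}\Psi,\Phi)\le 2\,d(\Psi,\Phi).$$
   Context: $\mathcal H=\mathbb C^d$ with the standard inner product; states are unit vectors. An observable $A$ is non-degenerate and identified with its orthonormal eigenbasis $\{\varphi_k\}_{k=0}^{d-1}$. Bures metric: $d(\Phi,\Psi)=\sqrt{2-2|\langle\Phi,\Psi\rangle|}$. Physical imposition operator: $T_{A\Phi}\Psi=\sum_{k=0}^{d-1}|\langle\varphi_k,\Phi\rangle|\,u_k(\Psi)\,\varphi_k$, where $u_k(\Psi)=\langle\varphi_k,\Psi\rangle/|\langle\varphi_k,\Psi\rangle|$ if $\langle\varphi_k,\Psi\rangle\ne0$ and $u_k(\Psi)=1$ otherwise. *)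

From HB Require Import structures.
From mathcomp Require Import all_boot all_order all_algebra.
Set Implicit Arguments. Unset Strict Implicit. Unset Printing Implicit Defensive.
Import Order.TTheory GRing.Theory Num.Theory.
Local Open Scope ring_scope.

Definition inner (C : numClosedFieldType) (d : nat) (x y : 'cV[C]_d) : C :=
  \sum_(i < d) (x i 0)^* * y i 0.

Definition unit_vec (C : numClosedFieldType) (d : nat) (x : 'cV[C]_d) : Prop :=
  inner x x = 1.

Definition orthonormal_basis (C : numClosedFieldType) (d : nat)
  (phi : 'I_d -> 'cV[C]_d) : Prop :=
  forall j k : 'I_d, inner (phi j) (phi k) = (j == k)%:R.

Definition bures (C : numClosedFieldType) (d : nat) (x y : 'cV[C]_d) : C :=
  sqrtC (2 - 2 * `|inner x y|).

Definition phase (C : numClosedFieldType) (c : C) : C :=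
  if c != 0 then c / `|c| else 1.

(* physical imposition operator T_{A Phi} Psi, A identified with basis phi *)
Definition imposition (C : numClosedFieldType) (d : nat)
  (phi : 'I_d -> 'cV[C]_d) (Phi Psi : 'cV[C]_d) : 'cV[C]_d :=
  \sum_(k < d) (`|inner (phi k) Phi| * phase (inner (phi k) Psi)) *: phi k.

From HB Require Import structures.
From mathcomp Require Import all_boot all_order all_algebra.
From mathcomp Require Import ring.
Import Order.TTheory GRing.Theory Num.Theory.
Local Open Scope ring_scope.

(* Expand in the orthonormal basis: a_k = <phi_k, Phi>, b_k = <phi_k, Psi>,
   u_k the phase of b_k and q_k = conj(u_k) a_k, so |q_k| = |a_k|.  Then
       <T Psi, Phi> = sum_k |a_k| q_k =: H   and   <Psi, Phi> = sum_k |b_k| q_k =: G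
   (the second by Parseval), and sum_k |a_k|^2 = sum_k |b_k|^2 = 1.  The theorem
   reduces to the scalar inequality 1 - |H| <= 4 (1 - |G|): rotating by the
   phase w with w G = |G|, the reals r_k = Re (w q_k) lie in [-|a_k|, |a_k|],
   and a per-coordinate quadratic estimate summed over k gives
   1 - Re (w H) <= 4 (1 - |G|), while Re (w H) <= |H|. *)

Lemma inner_combination (C : numClosedFieldType) (d n : nat)
    (c : 'I_n -> C) (v : 'I_n -> 'cV[C]_d) (x : 'cV[C]_d) :
  inner (\sum_(k < n) c k *: v k) x = \sum_(k < n) (c k)^* * inner (v k) x.
Proof.
rewrite /inner (eq_bigr (fun i => \sum_(k < n) (c k)^* * ((v k i 0)^* * x i 0))).
  by rewrite exchange_big; apply: eq_bigr => k _; rewrite mulr_sumr.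
move=> i _; rewrite summxE rmorph_sum big_distrl /=; apply: eq_bigr => k _.
by rewrite mxE rmorphM mulrA.
Qed.

Section Parseval.

Variables (C : numClosedFieldType) (d : nat) (phi : 'I_d -> 'cV[C]_d).
Hypothesis phi_on : orthonormal_basis phi.

(* Completeness: the matrix with columns phi_k is unitary, so its rows are
   orthonormal as well (a one-sided inverse of a square matrix is two-sided). *)
Lemma orthonormal_complete (i i' : 'I_d) :
  \sum_(k < d) phi k i 0 * (phi k i' 0)^* = (i == i')%:R.
Proof.
pose U : 'M[C]_d := \matrix_(i, k) phi k i 0.
pose Uh : 'M[C]_d := \matrix_(k, i) (phi k i 0)^*.
have UhU : Uh *m U = 1%:M.
  apply/matrixP => j k; rewrite !mxE -phi_on /inner.
  by apply: eq_bigr => l _; rewrite !mxE.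
have := congr1 (fun M : 'M[C]_d => M i i') (mulmx1C UhU); rewrite !mxE => <-.
by apply: eq_bigr => k _; rewrite !mxE.
Qed.

Lemma parseval (x y : 'cV[C]_d) :
  inner x y = \sum_(k < d) (inner (phi k) x)^* * inner (phi k) y.
Proof.
have expand k : (inner (phi k) x)^* * inner (phi k) y =
    \sum_(i < d) \sum_(i' < d) (x i 0)^* * (phi k i 0 * (phi k i' 0)^*) * y i' 0.
  rewrite /inner rmorph_sum big_distrl /=; apply: eq_bigr => i _.
  rewrite big_distrr /=; apply: eq_bigr => i' _.
  by rewrite rmorphM /= conjCK [phi k i 0 * _]mulrC !mulrA.
rewrite (eq_bigr _ (fun k _ => expand k)) exchange_big /inner /=.
apply: eq_bigr => i _; rewrite exchange_big /=.
rewrite (eq_bigr (fun i' => (x i 0)^* * (i == i')%:R * y i' 0)) => [|i' _]; last first.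
  by rewrite -big_distrl -big_distrr /= orthonormal_complete.
rewrite (bigD1 i) //= eqxx mulr1 big1 ?addr0 // => i' ne_i'i.
by rewrite eq_sym (negbTE ne_i'i) mulr0 mul0r.
Qed.

End Parseval.

Arguments parseval {C d phi}.

Section Phase.

Variable C : numClosedFieldType.

Lemma norm_phase (c : C) : `|phase c| = 1.
Proof.
rewrite /phase; case: ifP => [nz_c|_]; last by rewrite normr1.
by rewrite normrM normfV normr_id divff // normr_eq0.
Qed.

Lemma phase_polar (c : C) : c = `|c| * phase c.
Proof.
rewrite /phase; case: ifP => [nz_c|/negbFE/eqP->]; last by rewrite normr0 mul0r.
by rewrite mulrC divfK // normr_eq0.
Qed.

Lemma phase_align (c : C) : (phase c)^* * c = `|c|.
Proof.
by rewrite {2}[c]phase_polar mulrCA [_^* * _]mulrC -normCK norm_phase expr1n mulr1.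
Qed.

End Phase.

(* Split according to the
   sign of 4 p - s; each case is a sum of manifestly nonnegative terms. *)
Lemma coordinate_estimate (R : numDomainType) (s p r : R) :
  0 <= s -> 0 <= p -> r \is Num.real -> - s <= r -> r <= s ->
  s ^+ 2 - s * r <= 2 * s ^+ 2 + 2 * p ^+ 2 - 4 * (p * r).
Proof.
move=> s_ge0 p_ge0 r_real r_ge r_le; rewrite -subr_ge0.
have s_real : s \is Num.real by apply: ger0_real.
have p4_real : 4 * p \is Num.real by rewrite realM // ger0_real.
case/orP: (real_leVge s_real p4_real) => [s_le|p4_le].
- have -> : 2 * s ^+ 2 + 2 * p ^+ 2 - 4 * (p * r) - (s ^+ 2 - s * r)
      = 2 * (s - p) ^+ 2 + (s - r) * (4 * p - s) by ring.
  apply: addr_ge0; first by rewrite mulr_ge0 // -realEsqr realB // ger0_real.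
  by rewrite mulr_ge0 // subr_ge0.
- have -> : 2 * s ^+ 2 + 2 * p ^+ 2 - 4 * (p * r) - (s ^+ 2 - s * r)
      = 4 * p * s + 2 * p ^+ 2 + (r + s) * (s - 4 * p) by ring.
  apply: addr_ge0; first by apply: addr_ge0; rewrite ?mulr_ge0 ?exprn_ge0.
  by rewrite mulr_ge0 // ?subr_ge0 // -lerBlDr sub0r.
Qed.

Section ScalarBound.

(* s_k = |<phi_k, Phi>|, p_k = |<phi_k, Psi>| and q_k has modulus s_k. *)
Variables (C : numClosedFieldType) (d : nat) (s p q : 'I_d -> C).
Hypotheses (p_ge0 : forall k, 0 <= p k) (norm_q : forall k, `|q k| = s k).
Hypotheses (s_unit : \sum_(k < d) s k ^+ 2 = 1) (p_unit : \sum_(k < d) p k ^+ 2 = 1).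

Let s_ge0 k : 0 <= s k. Proof. by rewrite -norm_q. Qed.

(* |<T Psi, Phi>| <= 1, so that the Bures distance is well defined. *)
Lemma norm_weighted_sum_le1 : `|\sum_(k < d) s k * q k| <= 1.
Proof.
rewrite -s_unit; apply: le_trans (ler_norm_sum _ _ _) _.
by apply: ler_sum => k _; rewrite normrM norm_q ger0_norm // expr2.
Qed.

Lemma fidelity_bound :
  1 - `|\sum_(k < d) s k * q k| <= 4 * (1 - `|\sum_(k < d) p k * q k|).
Proof.
set G := \sum_(k < d) p k * q k; set H := \sum_(k < d) s k * q k.
pose w := (phase G)^*; pose r k := 'Re (w * q k).
have r_bound k : - s k <= r k <= s k.
  rewrite -real_ler_norml ?Creal_Re // -(norm_q k).
  apply: le_trans (leif_le (leif_normC_Re_Creal _)) _.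
  by rewrite normrM norm_conjC norm_phase mul1r.
have Re_rotated (c : 'I_d -> C) : (forall k, 0 <= c k) ->
    'Re (w * \sum_(k < d) c k * q k) = \sum_(k < d) c k * r k.
  move=> c_ge0; rewrite mulr_sumr raddf_sum; apply: eq_bigr => k _.
  by rewrite /= mulrCA ReMl // ger0_real.
have ReG : \sum_(k < d) p k * r k = `|G|.
  by rewrite -Re_rotated // phase_align (Creal_ReP _ (normr_real _)).
have summed : \sum_(k < d) (s k ^+ 2 - s k * r k) <=
    \sum_(k < d) (2 * s k ^+ 2 + 2 * p k ^+ 2 - 4 * (p k * r k)).
  apply: ler_sum => k _; have /andP[r_ge r_le] := r_bound k.
  by apply: coordinate_estimate; rewrite ?Creal_Re.
rewrite !sumrB big_split /= -!mulr_sumr s_unit p_unit ReG -Re_rotated // in summed.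
have ReH_le : 'Re (w * H) <= `|H|.
  apply: le_trans (leif_le (leif_Re_Creal _)) _.
  by rewrite normrM norm_conjC norm_phase mul1r.
apply: le_trans (lerB (lexx 1) ReH_le) _; apply: le_trans summed _.
by have -> : 2 * 1 + 2 * 1 - 4 * `|G| = 4 * (1 - `|G|) :> C by ring.
Qed.

End ScalarBound.

Arguments norm_weighted_sum_le1 {C d s q}.
Arguments fidelity_bound {C d s p q}.

Lemma bures_double_le (C : numClosedFieldType) (g h : C) :
  `|h| <= 1 -> 1 - `|h| <= 4 * (1 - `|g|) ->
  sqrtC (2 - 2 * `|h|) <= 2 * sqrtC (2 - 2 * `|g|).
Proof.
move=> h_le1 fidelity.
have scaled : 2 - 2 * `|h| <= 4 * (2 - 2 * `|g|).
  have -> : 2 - 2 * `|h| = 2 * (1 - `|h|) :> C by ring.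
  have -> : 4 * (2 - 2 * `|g|) = 2 * (4 * (1 - `|g|)) :> C by ring.
  by rewrite ler_pM2l.
have h_nneg : 0 <= 2 - 2 * `|h|.
  by rewrite subr_ge0 -[X in _ <= X]mulr1 ler_pM2l.
have g_nneg : 0 <= 2 - 2 * `|g|.
  by rewrite -(pmulr_rge0 _ (_ : 0 < 4)) //; apply: le_trans h_nneg scaled.
have sqrt4 : sqrtC 4 = 2 :> C.
  by rewrite -(sqrCK (ler0n _ 2)) expr2 -natrM.
by rewrite -{3}sqrt4 -sqrtCM ?nnegrE // ler_sqrtC ?nnegrE // mulr_ge0.
Qed.

Lemma inner_imposition (C : numClosedFieldType) (d : nat)
    (phi : 'I_d -> 'cV[C]_d) (Phi Psi x : 'cV[C]_d) :
  inner (imposition phi Phi Psi) x =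
  \sum_(k < d) `|inner (phi k) Phi| * ((phase (inner (phi k) Psi))^* * inner (phi k) x).
Proof.
rewrite inner_combination; apply: eq_bigr => k _.
by rewrite rmorphM /= conj_normC mulrA.
Qed.

Theorem proposition2 (C : numClosedFieldType) (d : nat)
  (phi : 'I_d -> 'cV[C]_d) (Phi Psi : 'cV[C]_d) :
  orthonormal_basis phi -> unit_vec Phi -> unit_vec Psi ->
  bures (imposition phi Phi Psi) Phi <= 2 * bures Psi Phi.
Proof.
move=> phi_on Phi_unit Psi_unit.
pose a k := inner (phi k) Phi; pose b k := inner (phi k) Psi.
pose q k := (phase (b k))^* * a k.
have norm_q k : `|q k| = `|a k|.
  by rewrite normrM norm_conjC norm_phase mul1r.
have coord_unit (x : 'cV[C]_d) : unit_vec x ->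
    \sum_(k < d) `|inner (phi k) x| ^+ 2 = 1.
  move=> x_unit; rewrite -x_unit (parseval phi_on).
  by apply: eq_bigr => k _; rewrite normCKC.
have inner_Psi_Phi : inner Psi Phi = \sum_(k < d) `|b k| * q k.
  rewrite (parseval phi_on); apply: eq_bigr => k _.
  by rewrite -/(b k) -/(a k) {1}[b k]phase_polar rmorphM /= conj_normC -mulrA.
rewrite /bures inner_imposition inner_Psi_Phi.
apply: bures_double_le.
- exact: norm_weighted_sum_le1 norm_q (coord_unit _ Phi_unit).
- exact: fidelity_bound (fun k => normr_ge0 (b k)) norm_q
           (coord_unit _ Phi_unit) (coord_unit _ Psi_unit).
Qed.
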